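(* For every natural number $N$ and every prime number $p$, there exists an integer $m \ge 1$ such that for every $l \in \mathbb{N}$, $$P_{T(2,2lm+1)}(a,N) \equiv a^{2lm} \pmod p \quad\text{and}\quad P_{T(2,-2lm-1)}(a,N) \equiv a^{-2lm} \pmod p.$$
   Context: $P_K(a,z)$ denotes the HOMFLY polynomial of a link $K$, normalised so that the trivial knot has $P=1$ and satisfying $a^{-1} P_{\widehat{\beta \sigma_i^2}} - a P_{\widehat{\beta}} = z P_{\widehat{\beta\sigma_i}}$ for all braids $\beta\in B_n$ and generators $\sigma_i$, where the hat denotes braid closure. For an integer $n$, $T(2,n)$ denotes the torus link obtained as the closure of the braid $\sigma_1^n \in B_2$; for $n$ odd it is a knot, and $T(2,-n)$ is the mirror image of $T(2,n)$. Congruence modulo $p$ of Laurent polynomials means congruence of all coefficients. *)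

From mathcomp Require Import all_boot all_algebra.
Set Implicit Arguments. Unset Strict Implicit. Unset Printing Implicit Defensive.
Import GRing.Theory Num.Theory.
Local Open Scope ring_scope.

(* A Laurent polynomial in two variables a, z with integer coefficients is
   represented by its coefficient function: [f i j] is the coefficient of
   a^i z^j (i, j : int). *)
Definition lpoly := int -> int -> int.

Definition lp_one : lpoly := fun i j => ((i == 0) && (j == 0))%:R.

(* HOMFLY polynomials of the torus links T(2,n), n : int, i.e. of the
   closures of sigma_1^n in B_2.  [P] is such a family iff
   - T(2,1) and T(2,-1) (closures of sigma_1^{+-1}) are trivial knots: P = 1;
   - the skein relation a^{-1} P_{T(2,n+2)} - a P_{T(2,n)} = z P_{T(2,n+1)}
     holds for every n (beta = sigma_1^n, i = 1), written coefficientwise: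
     coefficient of a^i z^j in a^{-1} Q is Q (i+1) j, in a Q is Q (i-1) j,
     in z Q is Q i (j-1). *)
Definition homfly_T2 (P : int -> lpoly) : Prop :=
  P 1 = lp_one /\ P (-1) = lp_one /\
  forall (n i j : int), P (n + 2) (i + 1) j - P n (i - 1) j = P (n + 1) i (j - 1).

(* [lp_eval_z f N g]: f is a polynomial in z (no negative powers of z, bounded
   degree) and g is the coefficient function (in the variable a) of the
   specialization f(a, N), i.e. g i = sum_j f i j * N^j. *)
Definition lp_eval_z (f : lpoly) (N : int) (g : int -> int) : Prop :=
  exists d : nat,
    (forall i j, f i j != 0 -> 0 <= j <= d%:Z) /\
    (forall i, g i = \sum_(k < d.+1) f i k%:Z * N ^+ k).

(* Existence witness: explicit solution of the skein recursion. *)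
Definition lp_shift (di dj : int) (f : lpoly) : lpoly := fun i j => f (i - di) (j - dj).
Definition lp_add (f g : lpoly) : lpoly := fun i j => f i j + g i j.
Definition lp_sub (f g : lpoly) : lpoly := fun i j => f i j - g i j.
(* P_{T(2,0)} = (a^{-1} - a) z^{-1} *)
Definition lp_P0 : lpoly := lp_sub (lp_shift (-1) (-1) lp_one) (lp_shift 1 (-1) lp_one).

Fixpoint T2fwd (k : nat) : lpoly * lpoly :=
  if k is k'.+1 then
    let (x, y) := T2fwd k' in (y, lp_add (lp_shift 2 0 x) (lp_shift 1 1 y))
  else (lp_P0, lp_one).
Fixpoint T2bwd (k : nat) : lpoly * lpoly :=
  if k is k'.+1 then
    let (x, y) := T2bwd k' in (lp_sub (lp_shift (-2) 0 y) (lp_shift (-1) 1 x), x)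
  else (lp_P0, lp_one).
Definition T2homfly (n : int) : lpoly :=
  match n with Posz k => (T2fwd k).1 | Negz k => (T2bwd k.+1).1 end.

From mathcomp Require Import all_boot all_algebra.
From mathcomp Require Import zify ring.
Import GRing.Theory Num.Theory.
Local Open Scope ring_scope.

(* Combining three instances of the skein relation eliminates the even torus links and gives
   a three-term recurrence for P_{T(2,2k-1)} in which z only enters through
   z^2 + 2.  Hence P_{T(2,2k-1)} = a^{2k-2} t_{k+1}(z) - a^{2k} t_k(z), where
   t_0 = -1, t_1 = 0, t_{k+2} = (z^2 + 2) t_{k+1} - t_k, and symmetrically
   P_{T(2,1-2k)} = a^{2-2k} t_{k+1}(z) - a^{-2k} t_k(z).  Modulo p the pair
   (t_k(N), t_{k+1}(N)) evolves by an invertible map of the finite set F_p^2,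
   so it returns to (t_1(N), t_2(N)) = (0, 1) with some period m; taking
   k = lm + 1 gives the two congruences. *)

Fixpoint tpoly (n : nat) : {poly int} :=
  if n is n1.+1 then
    if n1 is n2.+1 then ('X^2 + 2%:P) * tpoly n1 - tpoly n2 else 0
  else -1.

Arguments tpoly : simpl nomatch.

Lemma tpolySS n : tpoly n.+2 = ('X^2 + 2%:P) * tpoly n.+1 - tpoly n.
Proof. by []. Qed.

Definition zcoef (q : {poly int}) (j : int) : int :=
  if j is Posz n then q`_n else 0.

Lemma zcoef0 j : zcoef 0 j = 0.
Proof. by case: j => [k|k] //=; rewrite coef0. Qed.

Lemma zcoefN q j : zcoef (- q) j = - zcoef q j.
Proof. by case: j => [k|k] //=; rewrite coefN. Qed.

Lemma lp_oneE i j : lp_one i j = (i == 0)%:R * zcoef 1 j.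
Proof.
by case: j => [[|k]|k]; rewrite /lp_one /= ?coef1 ?andbT ?andbF ?mulr1 ?mulr0.
Qed.

Lemma zcoef_rec q r j :
  zcoef (('X^2 + 2%:P) * q - r) j = 2 * zcoef q j + zcoef q (j - 2) - zcoef r j.
Proof.
case: j => [k|k] /=; last by rewrite mulr0 addr0 subr0.
rewrite coefB mulrDl coefD coefXnM coefCM.
case: k => [|[|k]] //=; rewrite ?add0r ?addr0 // add0n !subSS subn0; ring.
Qed.

Lemma zcoef_tpolySS n j :
  zcoef (tpoly n.+2) j =
    2 * zcoef (tpoly n.+1) j + zcoef (tpoly n.+1) (j - 2) - zcoef (tpoly n) j.
Proof. exact: zcoef_rec. Qed.

Definition lp_twoterm (A B : int) (qa qb : {poly int}) : lpoly :=
  fun i j => (i == A)%:R * zcoef qa j - (i == B)%:R * zcoef qb j.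

Section TwotermRecurrence.

Variables (d : int) (X : nat -> lpoly).
Hypotheses (X0 : X 0 = lp_one) (X1 : X 1 = lp_one).
Hypothesis XSS : forall k i j,
  X k.+2 i j = 2 * X k.+1 (i - d) j + X k.+1 (i - d) (j - 2) - X k (i - 2 * d) j.

Lemma twoterm_recurrence k i j :
  X k i j = lp_twoterm (d * (k%:Z - 1)) (d * k%:Z) (tpoly k.+1) (tpoly k) i j.
Proof.
elim/ltn_ind: k i j => -[|[|k]] IH i j.
- by rewrite X0 lp_oneE /lp_twoterm mulr0 zcoef0 zcoefN mulr0 sub0r mulrN opprK.
- rewrite X1 lp_oneE /lp_twoterm subrr mulr0 zcoef0 mulr0 subr0.
  by rewrite tpolySS mulr0 sub0r opprK.
rewrite XSS !IH // /lp_twoterm !subr_eq.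
have -> : d * (k.+1%:Z - 1) + d = d * (k.+2%:Z - 1) by rewrite !intS; ring.
have -> : d * k.+1%:Z + d = d * k.+2%:Z by rewrite !intS; ring.
have -> : d * (k%:Z - 1) + 2 * d = d * (k.+2%:Z - 1) by rewrite !intS; ring.
have -> : d * k%:Z + 2 * d = d * k.+2%:Z by rewrite !intS; ring.
rewrite (zcoef_tpolySS k.+1 j) (zcoef_tpolySS k j); ring.
Qed.

End TwotermRecurrence.

Section Skein.

Variable P : int -> lpoly.
Hypothesis skein :
  forall n i j, P (n + 2) (i + 1) j - P n (i - 1) j = P (n + 1) i (j - 1).

Lemma skein_at n0 n1 n2 i0 i1 i2 j0 j1 :
    n1 = n0 + 1 -> n2 = n0 + 2 -> i1 = i0 + 1 -> i2 = i0 + 2 -> j0 = j1 - 1 ->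
  P n2 i2 j1 - P n0 i0 j1 = P n1 i1 j0.
Proof.
move=> -> -> -> -> ->; have := skein n0 (i0 + 1) j1.
by rewrite -addrA addrK.
Qed.

(* The middle term P_{T(2,n+1)}, and hence every even torus link, cancels. *)
Lemma skein_step2 n0 n1 n2 i0 i1 i2 j :
    n1 = n0 + 2 -> n2 = n0 + 4 -> i1 = i0 + 2 -> i2 = i0 + 4 ->
  P n2 i2 j + P n0 i0 j = 2 * P n1 i1 j + P n1 i1 (j - 2).
Proof.
move=> -> -> -> ->.
have h2 : P (n0 + 4) (i0 + 4) j - P (n0 + 2) (i0 + 2) j =
          P (n0 + 3) (i0 + 3) (j - 1) by apply: skein_at; ring.
have h1 : P (n0 + 3) (i0 + 3) (j - 1) - P (n0 + 1) (i0 + 1) (j - 1) =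
          P (n0 + 2) (i0 + 2) (j - 2) by apply: skein_at; ring.
have h0 : P (n0 + 2) (i0 + 2) j - P n0 i0 j = P (n0 + 1) (i0 + 1) (j - 1)
  by apply: skein_at; ring.
lia.
Qed.

End Skein.

Lemma homfly_T2_odd P k i j : homfly_T2 P ->
  P (2 * k%:Z - 1) i j =
    lp_twoterm (2 * (k%:Z - 1)) (2 * k%:Z) (tpoly k.+1) (tpoly k) i j.
Proof.
case=> P1 [Pm1 skein].
apply: (@twoterm_recurrence 2 (fun k => P (2 * k%:Z - 1))) => // {}k {}i {}j.
rewrite -(@skein_step2 P skein (2 * k%:Z - 1) (2 * k.+1%:Z - 1) (2 * k.+2%:Z - 1)
  (i - 2 * 2) (i - 2) i j); rewrite ?intS; ring.
Qed.

Lemma homfly_T2_oddN P k i j : homfly_T2 P ->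
  P (1 - 2 * k%:Z) i j =
    lp_twoterm (-2 * (k%:Z - 1)) (-2 * k%:Z) (tpoly k.+1) (tpoly k) i j.
Proof.
case=> P1 [Pm1 skein].
apply: (@twoterm_recurrence (-2) (fun k => P (1 - 2 * k%:Z))) => // {}k {}i {}j.
rewrite -(@skein_step2 P skein (1 - 2 * k.+2%:Z) (1 - 2 * k.+1%:Z) (1 - 2 * k%:Z)
  i (i - -2) (i - 2 * -2) j); rewrite ?intS; ring.
Qed.

Lemma lp_eval_z_twoterm (f : lpoly) A B qa qb (N : int) :
    (forall i j, f i j = lp_twoterm A B qa qb i j) ->
  lp_eval_z f N (fun i => (i == A)%:R * qa.[N] - (i == B)%:R * qb.[N]).
Proof.
move=> fE; have := leq_addr (size qb) (size qa); have := leq_addl (size qa) (size qb).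
move: (size qa + size qb)%N => d qb_d qa_d.
exists d; split=> [i [k|k] |i]; rewrite ?fE /lp_twoterm /=.
- rewrite lez_nat leqNgt; apply: contraNN => lt_dk.
  by rewrite !nth_default ?mulr0 ?subr0 //; apply: leq_trans (ltnW lt_dk).
- by rewrite !mulr0 subr0 eqxx.
rewrite (horner_coef_wide _ (leqW qa_d)) (horner_coef_wide _ (leqW qb_d)).
rewrite !mulr_sumr -sumrB; apply: eq_bigr => k _.
by rewrite fE mulrBl !mulrA.
Qed.

Lemma iter_order_mul (T : finType) (f : T -> T) x l :
  injective f -> iter (l * order f x) f x = x.
Proof.
move=> f_inj; elim: l => //= l IH.
by rewrite mulSn iterD IH (iter_order f_inj).
Qed.

Lemma tpoly_horner_periodic (R : finNzRingType) (x : int) :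
  exists2 m, (0 < m)%N & forall l,
    ((tpoly (l * m).+1).[x]%:~R : R) = 0 /\ ((tpoly (l * m).+2).[x]%:~R : R) = 1.
Proof.
pose c : R := (x ^+ 2 + 2)%:~R.
pose step (u : R * R) := (u.2, c * u.2 - u.1).
have step_inj : injective step.
  by move=> [u0 u1] [v0 v1] [/= <-] /addrI /oppr_inj ->.
pose t n : R := (tpoly n).[x]%:~R.
have iter_step n : iter n step (t 0%N, t 1%N) = (t n, t n.+1).
  elim: n => // n IH; rewrite iterS IH; congr (_, _).
  by rewrite /t tpolySS !hornerE rmorphB rmorphM /= -addrA.
have m_gt0 := order_gt0 step (t 0%N, t 1%N).
exists (order step (t 0%N, t 1%N)) => //.
move=> l; have := iter_step (l * order step (t 0%N, t 1%N)).+1.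
rewrite iterS iter_order_mul // /t => -[<- <-].
by rewrite /= horner0 hornerN hornerC rmorph0 rmorphN rmorph1 mulr0 sub0r opprK.
Qed.

Lemma lp_eval_z_twoterm_mod {p : nat} {f : lpoly} {A B : int}
    {qa qb : {poly int}} {N : int} : prime p ->
    (forall i j, f i j = lp_twoterm A B qa qb i j) ->
    (qa.[N]%:~R : 'F_p) = 1 -> (qb.[N]%:~R : 'F_p) = 0 ->
  exists g, lp_eval_z f N g /\ forall i, (g i == (i == A)%:R %[mod p%:Z])%Z.
Proof.
move=> p_pr fE qa1 qb0; eexists; split; first exact: lp_eval_z_twoterm.
move=> i; rewrite eqz_mod_dvd (dvdz_pcharf (pchar_Fp p_pr)).
by rewrite !rmorphB !rmorphM /= qa1 qb0 mulr0 subr0 mulr1 subrr.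
Qed.

Theorem mainTheorem4 :
  forall P : int -> lpoly, homfly_T2 P ->
  forall (N p : nat), prime p ->
  exists m : nat, (1 <= m)%N /\
    forall l : nat,
      (exists g, lp_eval_z (P (2 * l * m + 1)%N%:Z) N%:Z g /\
         forall i : int, (g i == ((i == (2 * l * m)%N%:Z))%:R %[mod p%:Z])%Z) /\
      (exists g, lp_eval_z (P (- (2 * l * m + 1)%N%:Z)) N%:Z g /\
         forall i : int, (g i == ((i == - (2 * l * m)%N%:Z))%:R %[mod p%:Z])%Z).
Proof.
move=> P HP N p p_pr.
have [m m_gt0 tpoly_per] := tpoly_horner_periodic 'F_p N%:Z.
exists m; split=> // l; have [t1 t2] := tpoly_per l.
have -> : - (2 * l * m + 1)%N%:Z = 1 - 2 * (l * m).+1%:Z by lia.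
have -> : - (2 * l * m)%N%:Z = -2 * ((l * m).+1%:Z - 1) by lia.
have -> : (2 * l * m + 1)%N%:Z = 2 * (l * m).+1%:Z - 1 by lia.
have -> : (2 * l * m)%N%:Z = 2 * ((l * m).+1%:Z - 1) by lia.
split; apply: (lp_eval_z_twoterm_mod p_pr _ t2 t1) => i j.
- exact: homfly_T2_odd.
- exact: homfly_T2_oddN.
Qed.
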